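(* (i) Let $G=(V,E,w)$ be a weighted graph with $n=|V|\ge 3$ vertices and symmetric nonnegative weights. Then $\rho^*_G\in[1,n-2]$. (ii) Let $G=(V,E)$ be a connected unweighted graph with $n=|V|$ and $m=|E|$. Then $\rho^*_G\in\left[1,\frac{n^2-2n}{2m-n}\right]$.
   Context: Let $V=\{v_1,\dots,v_n\}$; weights are given by a symmetric nonnegative matrix with $w_{ij}=0$ when $(v_i,v_j)\notin E$. An unweighted graph has all edge weights equal to $1$. An HC-tree for $V$ is a rooted tree with leaf set $V$; LCA denotes lowest common ancestor. For distinct $i,j,k$: relation $\{i,j|k\}$ holds in $T$ if $\mathrm{LCA}(v_i,v_j)$ is a proper descendant of $\mathrm{LCA}(v_i,v_j,v_k)$; $\{i|j|k\}$ holds if $\mathrm{LCA}(v_i,v_j)=\mathrm{LCA}(v_j,v_k)=\mathrm{LCA}(v_i,v_j,v_k)$. The triplet cost $c_T(i,j,k)$ is $w_{ik}+w_{jk}$ if $\{i,j|k\}$ holds, $w_{ij}+w_{jk}$ if $\{i,k|j\}$, $w_{ij}+w_{ik}$ if $\{j,k|i\}$, and $w_{ij}+w_{jk}+w_{ik}$ if $\{i|j|k\}$. $\mathrm{TC}_G(T)=\sum c_T(i,j,k)$ over unordered triples of distinct indices; base cost $\mathrm{BC}(G)=\sum\min\{w_{ij}+w_{ik},w_{ij}+w_{jk},w_{ik}+w_{jk}\}$ over the same triples. The ratio-cost is $\rho_G(T)=\mathrm{TC}_G(T)/\mathrm{BC}(G)$ with conventions $0/0=1$ and $x/0=+\infty$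 for $x>0$, and $\rho^*_G=\min_T\rho_G(T)$ over all HC-trees $T$ for $V$. *)

From HB Require Import structures.
From mathcomp Require Import all_boot all_order all_algebra.
From mathcomp Require Import constructive_ereal.
Set Implicit Arguments. Unset Strict Implicit. Unset Printing Implicit Defensive.
Import Order.TTheory GRing.Theory Num.Theory.
Local Open Scope ring_scope.

(* A node of the tree
   is identified with its address (the sequence of child indices on the path
   from the root); ancestor = prefix of address. *)
Inductive hctree (n : nat) : Type :=
  | HLeaf of 'I_n
  | HNode of seq (hctree n).

Arguments HLeaf {n}.
Arguments HNode {n}.

Fixpoint leaves {n} (t : hctree n) : seq ('I_n * seq nat) :=
  match t with
  | HLeaf v => [:: (v, [::])]
  | HNode ts =>
      (fix aux (i : nat) (us : seq (hctree n)) :=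
         match us with
         | [::] => [::]
         | u :: us' => [seq (p.1, i :: p.2) | p <- leaves u] ++ aux i.+1 us'
         end) 0%N ts
  end.

(* every internal node has at least one child, so every leaf is labelled *)
Fixpoint no_empty_node {n} (t : hctree n) : bool :=
  match t with
  | HLeaf _ => true
  | HNode ts =>
      (fix aux (us : seq (hctree n)) :=
         match us with
         | [::] => true
         | u :: us' => no_empty_node u && aux us'
         end) ts && (if ts is [::] then false else true)
  end.

Definition is_hctree {n} (t : hctree n) : bool :=
  no_empty_node t && perm_eq [seq p.1 | p <- leaves t] (enum 'I_n).

Definition addr {n} (t : hctree n) (v : 'I_n) : seq nat :=
  nth [::] [seq p.2 | p <- leaves t] (index v [seq p.1 | p <- leaves t]).

Fixpoint lcp (a b : seq nat) : seq nat :=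
  match a, b with
  | x :: a', y :: b' => if x == y then x :: lcp a' b' else [::]
  | _, _ => [::]
  end.

Definition lca2 {n} (t : hctree n) (i j : 'I_n) : seq nat :=
  lcp (addr t i) (addr t j).
Definition lca3 {n} (t : hctree n) (i j k : 'I_n) : seq nat :=
  lcp (lcp (addr t i) (addr t j)) (addr t k).

Definition proper_desc (u v : seq nat) : bool := prefix v u && (u != v).

Definition rel_sep {n} (t : hctree n) (i j k : 'I_n) : bool :=
  proper_desc (lca2 t i j) (lca3 t i j k).
Definition rel_star {n} (t : hctree n) (i j k : 'I_n) : bool :=
  (lca2 t i j == lca3 t i j k) && (lca2 t j k == lca3 t i j k).

Section Costs.
Variable R : realFieldType.
Variable n : nat.
Variable w : 'M[R]_n.

Definition triplet_cost (t : hctree n) (i j k : 'I_n) : R :=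
  if rel_sep t i j k then w i k + w j k
  else if rel_sep t i k j then w i j + w j k
  else if rel_sep t j k i then w i j + w i k
  else if rel_star t i j k then w i j + w j k + w i k
  else 0.

Definition TC (t : hctree n) : R :=
  \sum_(i < n) \sum_(j < n | (i < j)%N) \sum_(k < n | (j < k)%N)
     triplet_cost t i j k.

Definition BC : R :=
  \sum_(i < n) \sum_(j < n | (i < j)%N) \sum_(k < n | (j < k)%N)
     Num.min (w i j + w i k) (Num.min (w i j + w j k) (w i k + w j k)).

Definition rho (t : hctree n) : \bar R :=
  if BC == 0 then (if TC t == 0 then 1%:E else +oo%E)
  else (TC t / BC)%:E.

Definition rho_star_in (lo hi : R) : Prop :=
  exists t : hctree n, [/\ is_hctree t,
    (forall t' : hctree n, is_hctree t' -> (rho t <= rho t')%E),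
    (lo%:E <= rho t)%E & (rho t <= hi%:E)%E].
End Costs.

Definition unweighted {R : realFieldType} {n} (e : rel 'I_n) : 'M[R]_n :=
  \matrix_(i, j) (if e i j then 1 else 0).

Definition num_edges {n} (e : rel 'I_n) : nat :=
  #|[set p : 'I_n * 'I_n | (p.1 < p.2)%N && e p.1 p.2]|.

From HB Require Import structures.
From mathcomp Require Import all_boot all_order all_algebra all_fingroup.
From mathcomp Require Import constructive_ereal zify ring lra.
From Stdlib Require Import Classical.
Set Implicit Arguments. Unset Strict Implicit. Unset Printing Implicit Defensive.
Import Order.TTheory GRing.Theory Num.Theory.

(* Every triple pays in TC at least its base cost, so rho >= 1 for every tree, and
   a minimizing tree exists because rho depends on a tree only through its finitely
   many LCA relations.
   (i) Order the pairs by weight, breaking ties lexicographically.  The pairs that are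
   heaviest among all pairs meeting them form a matching M.  In the tree whose root
   has one child per pair of M and per unmatched vertex, a triple pays all its pairs
   except a pair of M, so TC = (n - 2) w(E \ M).  A triple pays in BC all its pairs
   but the heaviest one, and a pair outside M is not the heaviest in some triple, so
   BC >= w(E \ M).
   (ii) For a connected unweighted graph with degrees d_v, averaging over the n!
   caterpillars gives a tree with TC <= 2 (n - 2) m / 3, while each path of length
   two inside a triple contributes 2/3 to BC, so BC >= (sum d_v^2 - 2 m) / 3, which
   is at least (4 m^2 / n - 2 m) / 3 by Cauchy-Schwarz.  Connectivity and n >= 3
   give 2 m > n, and the ratio is at most n (n - 2) / (2 m - n). *)

Local Open Scope ring_scope.

Lemma exists_minimizer (T : Type) (P : finType) d (O : orderType d)
    (ok : T -> Prop) (pat : T -> P) (f : P -> O) (t0 : T) :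
  ok t0 -> exists2 t, ok t & forall t', ok t' -> (f (pat t) <= f (pat t'))%O.
Proof.
have minP t : (forall t', ok t' -> (f (pat t) <= f (pat t'))%O) \/
              exists2 t', ok t' & (f (pat t') < f (pat t))%O.
  have [|no_lt] := classic (exists2 t', ok t' & (f (pat t') < f (pat t))%O); first by right.
  by left => t' ok_t'; rewrite leNgt; apply/negP => lt_t't; apply: no_lt; exists t'.
move=> ok_t0; suff: forall m t, ok t -> (#|[pred p | (f p < f (pat t))%O]| <= m)%N ->
    exists2 t, ok t & forall t', ok t' -> (f (pat t) <= f (pat t'))%O.
  by move/(_ _ t0 ok_t0 (leqnn _)).
elim=> [|m IHm] t ok_t card_t; have [|[t' ok_t' lt_t't]] := minP t; try by exists t.
  by move: card_t; rewrite leqn0 => /eqP/card0_eq/(_ (pat t')); rewrite inE lt_t't.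
apply: (IHm t' ok_t'); rewrite -ltnS (leq_trans _ card_t) // proper_card //.
apply/properP; split; first by apply/subsetP => p; rewrite !inE => /lt_trans; apply.
by exists (pat t'); rewrite !inE ?ltxx.
Qed.

Lemma exists_le_mean (R : realDomainType) (T : finType) (F : T -> R) (c : R) :
  (0 < #|T|)%N -> \sum_x F x <= #|T|%:R * c -> exists x, F x <= c.
Proof.
move=> /card_gt0P[x0 _] sum_le; case: (boolP [exists x, F x <= c]) => [/existsP //|/existsPn F_gt].
suff: #|T|%:R * c < \sum_x F x by rewrite ltNge sum_le.
rewrite mulr_natl -sumr_const; apply: ltr_sum => [|x _]; first by apply/hasP; exists x0.
by rewrite ltNge F_gt.
Qed.

Lemma lt_max3 d (O : orderType d) (x y z : O) : x != y -> x != z -> y != z ->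
  [|| (y < x) && (z < x), (x < y) && (z < y) | (x < z) && (y < z)]%O.
Proof.
move=> nxy nxz nyz; case: (ltgtP y x) nxy => [yx|xy|->] //= _.
  by case: (ltgtP z x) nxz => [zx|xz|->] //= _; exact: lt_trans yx xz.
by case: (ltgtP z y) nyz => [zy|yz|->] //= _; rewrite (lt_trans xy yz).
Qed.

Lemma sqr_sum_le (R : realFieldType) (n : nat) (x : 'I_n -> R) :
  (\sum_(i < n) x i) ^+ 2 <= n%:R * \sum_(i < n) x i ^+ 2.
Proof.
have sum_sqr_diff : \sum_(i < n) \sum_(j < n) (x i - x j) ^+ 2 =
    \sum_(i < n) \sum_(j < n) (x i ^+ 2 + x j ^+ 2) - 2 * \sum_(i < n) \sum_(j < n) x i * x j.
  rewrite mulr_sumr -sumrB; apply: eq_bigr => i _; rewrite mulr_sumr -sumrB.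
  by apply: eq_bigr => j _; rewrite sqrrB; ring.
have sum_sqr : \sum_(i < n) \sum_(j < n) (x i ^+ 2 + x j ^+ 2) = 2 * (n%:R * \sum_(i < n) x i ^+ 2).
  rewrite (eq_bigr (fun i => x i ^+ 2 *+ n + \sum_(j < n) x j ^+ 2)) => [|i _]; last first.
    by rewrite big_split sumr_const card_ord.
  rewrite big_split sumrMnl sumr_const card_ord; move: (\sum_(i < n) x i ^+ 2) => q /=.
  by rewrite -mulr_natl; ring.
have sum_prod : \sum_(i < n) \sum_(j < n) x i * x j = (\sum_(i < n) x i) ^+ 2.
  by rewrite expr2 mulr_suml; apply: eq_bigr => i _; rewrite mulr_sumr.
have : 0 <= \sum_(i < n) \sum_(j < n) (x i - x j) ^+ 2.
  by do 2 (apply: sumr_ge0 => ? _); exact: sqr_ge0.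
by rewrite sum_sqr_diff sum_sqr sum_prod; lra.
Qed.

Section Connected.
Variables (T : finType) (e : rel T).
Hypothesis e_sym : symmetric e.
Hypothesis e_connected : forall x y, connect e x y.

Lemma exists_notin (A : {set T}) : (#|A| < #|T|)%N -> exists x, x \notin A.
Proof.
move=> ltA; apply/existsP; rewrite -negb_forall; apply: contraL ltA => /forallP inA.
by rewrite -leqNgt -cardsT subset_leq_card //; apply/subsetP => x _; exact: inA.
Qed.

Lemma connected_neighbor x : (1 < #|T|)%N -> exists y, e x y.
Proof.
move=> T_gt1; have [y] : exists y, y \notin [set x] by apply: exists_notin; rewrite cards1.
rewrite inE => yx; have /connectP[[|z p] /= xp y_last] := e_connected x y.
  by rewrite y_last eqxx in yx.
by case/andP: xp => xz _; exists z.
Qed.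

Lemma connected_branching : (2 < #|T|)%N -> exists x a b, [/\ a != b, e x a & e x b].
Proof.
move=> T_gt2; have /card_gt0P[x0 _] : (0 < #|T|)%N by apply: leq_trans T_gt2.
have [a x0a] := connected_neighbor x0 (ltnW T_gt2).
case: (boolP [exists x, exists a, exists b, [&& a != b, e x a & e x b]]).
  by case/existsP => x /existsP[a' /existsP[b /and3P[ab xa xb]]]; exists x, a', b.
(* Otherwise every vertex has at most one neighbour and {x0, a} is a component. *)
move/existsPn => no_branch.
have nbr_uniq x a' b : e x a' -> e x b -> a' = b.
  move=> xa xb; apply/eqP/negP => /negP ab; have /existsPn/(_ a') := no_branch x.
  by move/existsPn/(_ b); rewrite ab xa xb.
have closed_x0a : closed e (mem [set x0; a]).
  apply: (intro_closed (sym_connect_sym e_sym)) => u v uv.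
  rewrite !inE => /orP[]/eqP u_eq; rewrite u_eq in uv.
    by rewrite (nbr_uniq _ _ _ uv x0a) eqxx orbT.
  by rewrite (nbr_uniq _ _ _ uv (_ : e a x0)) ?eqxx // e_sym.
have [c] : exists c, c \notin [set x0; a].
  by apply: exists_notin; apply: leq_ltn_trans T_gt2; rewrite cards2; case: (_ != _).
by rewrite -(closed_connect closed_x0a (e_connected x0 c)) !inE eqxx.
Qed.

End Connected.

Lemma lcpC (a b : seq nat) : lcp a b = lcp b a.
Proof.
by elim: a b => [|x a IHa] [|y b] //=; rewrite eq_sym; case: eqP => // ->; rewrite IHa.
Qed.

Lemma lcpA (a b c : seq nat) : lcp (lcp a b) c = lcp a (lcp b c).
Proof.
elim: a b c => [|x a IHa] [|y b] [|z c] //=; first by case: (x == y).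
case: (eqVneq x y) => [<-|xy] /=.
  by case: (eqVneq x z) => //= _; rewrite eqxx IHa.
by case: (y == z); rewrite //= (negbTE xy).
Qed.

Lemma lcp_prefix (a b : seq nat) : prefix (lcp a b) a.
Proof.
by elim: a b => [|x a IHa] [|y b] //=; case: (x == y) => //=; rewrite eqxx IHa.
Qed.

Lemma lcp_cons_eq0 (x y : nat) (a b : seq nat) : (lcp (x :: a) (y :: b) == [::]) = (x != y).
Proof. by rewrite /=; case: (x == y). Qed.

Lemma lcp_rcons_nseq1 (a b : nat) : a != b ->
  lcp (rcons (nseq a 1%N) 0%N) (rcons (nseq b 1%N) 0%N) = nseq (minn a b) 1%N.
Proof. by elim: a b => [|a IHa] [|b] //= ab; rewrite IHa // minnSS. Qed.

Lemma lcp_nseq1_rcons (a b : nat) : lcp (nseq a 1%N) (rcons (nseq b 1%N) 0%N) = nseq (minn a b) 1%N.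
Proof. by elim: a b => [|a IHa] [|b] //=; rewrite IHa minnSS. Qed.

Lemma nseq1_inj (a b : nat) : (nseq a 1%N == nseq b 1%N) = (a == b).
Proof. by apply/eqP/eqP => [/(congr1 size)|->]; rewrite ?size_nseq. Qed.

Section HCTrees.
Variable n : nat.
Implicit Types (t : hctree n) (ts : seq (hctree n)) (s : seq 'I_n).

Local Notation labels t := [seq p.1 | p <- leaves t].

(* The auxiliary fixpoint inside [leaves], so that [leaves_HNode] holds by conversion. *)
Fixpoint leaves_from (c : nat) ts : seq ('I_n * seq nat) :=
  if ts is t :: ts' then [seq (p.1, c :: p.2) | p <- leaves t] ++ leaves_from c.+1 ts'
  else [::].

Lemma leaves_HNode ts : leaves (HNode ts) = leaves_from 0 ts.
Proof. by []. Qed.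

Lemma labels_HNode ts : labels (HNode ts) = flatten [seq labels t | t <- ts].
Proof.
rewrite leaves_HNode; elim: ts 0%N => [|t ts IHts] c //=.
by rewrite map_cat IHts -map_comp.
Qed.

Lemma mem_leaves_HNode ts v a : (v, a) \in leaves (HNode ts) ->
  exists c a', [/\ a = c :: a', (c < size ts)%N & (v, a') \in leaves (nth (HNode [::]) ts c)].
Proof.
rewrite leaves_HNode; suff: forall c, (v, a) \in leaves_from c ts -> exists d a',
    [/\ a = (c + d)%N :: a', (d < size ts)%N & (v, a') \in leaves (nth (HNode [::]) ts d)].
  exact.
elim: ts => [|t ts IHts] c //=; rewrite mem_cat => /orP[/mapP[[u b] ub [-> ->]]|].
  by exists 0%N, b; rewrite addn0.
case/IHts => d [a' [-> lt_d va']]; exists d.+1, a'.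
by rewrite addnS.
Qed.

Lemma no_empty_HNode ts : no_empty_node (HNode ts) = all no_empty_node ts && ~~ nilp ts.
Proof. by rewrite /=; case: ts. Qed.

Lemma leaves_HNode2 t1 t2 : leaves (HNode [:: t1; t2]) =
  [seq (p.1, 0%N :: p.2) | p <- leaves t1] ++ [seq (p.1, 1%N :: p.2) | p <- leaves t2].
Proof. by rewrite /= cats0. Qed.

Lemma labels_HNode2 t1 t2 : labels (HNode [:: t1; t2]) = labels t1 ++ labels t2.
Proof. by rewrite labels_HNode /= cats0. Qed.

Lemma no_empty_HNode2 t1 t2 :
  no_empty_node (HNode [:: t1; t2]) = no_empty_node t1 && no_empty_node t2.
Proof. by rewrite /= !andbT. Qed.

Lemma addr_mem t v : v \in labels t -> (v, addr t v) \in leaves t.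
Proof.
move=> vt; pose p0 := (v, [::] : seq nat); set i := index v (labels t).
have lt_i : (i < size (leaves t))%N by rewrite -(size_map fst) index_mem.
have vi : (nth p0 (leaves t) i).1 = v by rewrite -(nth_map p0 v) // nth_index.
rewrite /addr (nth_map p0) // -/i -[X in (X, _)]vi -surjective_pairing.
exact: mem_nth.
Qed.

(* The last vertex hangs below a unary node, so the vertex in position p has address
   1^p 0 (see [mem_leaves_caterpillar_of]). *)
Fixpoint caterpillar_of s : hctree n :=
  if s is v :: s' then HNode (HLeaf v :: if s' is [::] then [::] else [:: caterpillar_of s'])
  else HNode [::].

Lemma caterpillar_of_cons2 u v s :
  caterpillar_of [:: u, v & s] = HNode [:: HLeaf u; caterpillar_of (v :: s)].
Proof. by []. Qed.

Lemma labels_caterpillar_of s : labels (caterpillar_of s) = s.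
Proof.
elim: s => [|u [|v s] IHs] //.
by rewrite caterpillar_of_cons2 labels_HNode2 IHs.
Qed.

Lemma no_empty_caterpillar_of s : ~~ nilp s -> no_empty_node (caterpillar_of s).
Proof.
elim: s => [|u [|v s] IHs] // _.
by rewrite caterpillar_of_cons2 no_empty_HNode2 IHs.
Qed.

Lemma mem_leaves_caterpillar_of s v a : uniq s -> (v, a) \in leaves (caterpillar_of s) ->
  a = rcons (nseq (index v s) 1%N) 0%N.
Proof.
elim: s a => [|x [|y s] IHs] a //; first by rewrite inE => _ /eqP[-> ->] /=; rewrite eqxx.
rewrite caterpillar_of_cons2 leaves_HNode2 mem_cat => /andP[xNs ys_uniq].
case/orP=> /mapP[[u b] ub [vu ->]]; subst u.
  by move: ub; rewrite inE => /eqP[-> ->] /=; rewrite eqxx.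
have vys : v \in y :: s.
  by rewrite -(labels_caterpillar_of (y :: s)); exact: (map_f (fun p => p.1) ub).
have xv : x != v by apply: contraNneq _ xNs => ->.
by rewrite (IHs _ ys_uniq ub) /= (negbTE xv).
Qed.

(* Vertex v sits at position r v along the spine. *)
Definition caterpillar (r : {perm 'I_n}) : hctree n :=
  caterpillar_of [seq (r^-1)%g i | i <- enum 'I_n].

Lemma index_perm_enum (r : {perm 'I_n}) v : index v [seq (r^-1)%g i | i <- enum 'I_n] = r v.
Proof. by rewrite -{1}(permK r v) index_map ?index_enum_ord //; apply: perm_inj. Qed.

Lemma perm_enum_uniq (r : {perm 'I_n}) : uniq [seq (r^-1)%g i | i <- enum 'I_n].
Proof. by rewrite map_inj_uniq ?enum_uniq //; apply: perm_inj. Qed.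

Lemma caterpillar_hctree r : (0 < n)%N -> is_hctree (caterpillar r).
Proof.
move=> n_gt0; rewrite /is_hctree /caterpillar labels_caterpillar_of no_empty_caterpillar_of.
  apply: uniq_perm; rewrite ?perm_enum_uniq ?enum_uniq // => v.
  by rewrite mem_enum -index_mem index_perm_enum size_map size_enum_ord ltn_ord.
by rewrite /nilp size_map size_enum_ord -lt0n.
Qed.

Lemma addr_caterpillar r v : addr (caterpillar r) v = rcons (nseq (r v) 1%N) 0%N.
Proof.
rewrite -index_perm_enum; apply: mem_leaves_caterpillar_of; first exact: perm_enum_uniq.
apply: addr_mem; rewrite labels_caterpillar_of -index_mem index_perm_enum.
by rewrite size_map size_enum_ord ltn_ord.
Qed.

Section PartitionTree.
Variables (T : eqType) (f : 'I_n -> T).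

Definition classes : seq T := undup [seq f v | v <- enum 'I_n].

Definition partition_tree : hctree n :=
  HNode [seq HNode [seq HLeaf v | v <- enum 'I_n & f v == c] | c <- classes].

Lemma labels_class_node c :
  labels (HNode [seq HLeaf v | v <- enum 'I_n & f v == c]) = [seq v <- enum 'I_n | f v == c].
Proof. by rewrite labels_HNode -map_comp flatten_seq1. Qed.

Lemma labels_partition_tree : perm_eq (labels partition_tree) (enum 'I_n).
Proof.
apply/allP => v _; apply/eqP; rewrite labels_HNode -map_comp count_flatten -map_comp.
rewrite (eq_map (g := fun c => nat_of_bool (pred1 (f v) c))) => [|c /=]; last first.
  rewrite labels_class_node count_uniq_mem; last exact/filter_uniq/enum_uniq.
  by rewrite mem_filter mem_enum andbT eq_sym.
rewrite sumn_count count_uniq_mem ?undup_uniq // count_uniq_mem ?enum_uniq //.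
by rewrite mem_undup map_f ?mem_enum.
Qed.

Lemma mem_classes v : f v \in classes.
Proof. by rewrite mem_undup map_f ?mem_enum. Qed.

Lemma index_classes_eq u v : (index (f u) classes == index (f v) classes) = (f u == f v).
Proof.
apply/eqP/eqP => [e|-> //].
by rewrite -(nth_index (f u) (mem_classes u)) e nth_index ?mem_classes.
Qed.

Lemma no_empty_class_node c : c \in classes ->
  no_empty_node (HNode [seq HLeaf v | v <- enum 'I_n & f v == c]).
Proof.
rewrite mem_undup no_empty_HNode all_map => /mapP[v _ ->]; apply/andP; split; first by apply/allP.
by rewrite /nilp size_map size_filter -lt0n -has_count; apply/hasP; exists v; rewrite ?mem_enum.
Qed.

Lemma partition_tree_hctree : (0 < n)%N -> is_hctree partition_tree.
Proof.
move=> n_gt0; rewrite /is_hctree labels_partition_tree andbT no_empty_HNode all_map.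
apply/andP; split; first by apply/allP => c; exact: no_empty_class_node.
by case: classes (mem_classes (Ordinal n_gt0)).
Qed.

Lemma addr_partition_tree v : exists a, addr partition_tree v = index (f v) classes :: a.
Proof.
have vt : v \in labels partition_tree by rewrite (perm_mem labels_partition_tree) mem_enum.
have /mem_leaves_HNode[c [a [-> lt_c va]]] := addr_mem vt; exists a; congr (_ :: _).
rewrite size_map in lt_c; rewrite (nth_map (f v)) // in va.
have := map_f (fun p => p.1) va; rewrite labels_class_node mem_filter => /andP[/eqP /= -> _].
by rewrite index_uniq ?undup_uniq.
Qed.

Lemma lca2_partition_tree u v : (lca2 partition_tree u v == [::]) = (f u != f v).
Proof.
rewrite /lca2; have [a ->] := addr_partition_tree u; have [b ->] := addr_partition_tree v.
by rewrite lcp_cons_eq0 index_classes_eq.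
Qed.

Lemma lca3_partition_tree i j k :
  ~~ ((f i == f j) && (f j == f k)) -> lca3 partition_tree i j k = [::].
Proof.
rewrite /lca3; have [a ->] := addr_partition_tree i; have [b ->] := addr_partition_tree j.
have [c ->] := addr_partition_tree k; rewrite /= index_classes_eq.
case: (eqVneq (f i) (f j)) => //= fij fjk.
by rewrite index_classes_eq fij (negbTE fjk).
Qed.

End PartitionTree.
End HCTrees.

Section Costs.
Variables (R : realFieldType) (n : nat) (w : 'M[R]_n).
Implicit Types (t : hctree n) (i j k : 'I_n) (F G : 'I_n -> 'I_n -> 'I_n -> R).

Definition sum_triples F : R :=
  \sum_(i < n) \sum_(j < n | (i < j)%N) \sum_(k < n | (j < k)%N) F i j k.

Definition sum_distinct F : R :=
  \sum_(i < n) \sum_(j < n) \sum_(k < n) (if [&& i != j, i != k & j != k] then F i j k else 0).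

Lemma eq_sum_triples F G :
  (forall i j k, i != j -> i != k -> j != k -> F i j k = G i j k) -> sum_triples F = sum_triples G.
Proof.
move=> FG; apply: eq_bigr => i _; apply: eq_bigr => j ij; apply: eq_bigr => k jk.
by apply: FG; rewrite -val_eqE /= ?(ltn_eqF ij) ?(ltn_eqF jk) ?(ltn_eqF (ltn_trans ij jk)).
Qed.

Lemma ler_sum_triples F G :
  (forall i j k, i != j -> i != k -> j != k -> F i j k <= G i j k) ->
  sum_triples F <= sum_triples G.
Proof.
move=> FG; apply: ler_sum => i _; apply: ler_sum => j ij; apply: ler_sum => k jk.
by apply: FG; rewrite -val_eqE /= ?(ltn_eqF ij) ?(ltn_eqF jk) ?(ltn_eqF (ltn_trans ij jk)).
Qed.

Lemma exchange_sum_triples (I : finType) (F : I -> 'I_n -> 'I_n -> 'I_n -> R) :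
  \sum_x sum_triples (F x) = sum_triples (fun i j k => \sum_x F x i j k).
Proof.
rewrite exchange_big; apply: eq_bigr => i _; rewrite exchange_big; apply: eq_bigr => j _.
by rewrite exchange_big.
Qed.

Lemma mulr_sum_triples c F : c * sum_triples F = sum_triples (fun i j k => c * F i j k).
Proof.
rewrite mulr_sumr; apply: eq_bigr => i _; rewrite mulr_sumr; apply: eq_bigr => j _.
by rewrite mulr_sumr.
Qed.

Lemma sum_triplesE F : sum_triples F =
  \sum_(i < n) \sum_(j < n) \sum_(k < n) (if (i < j < k)%N then F i j k else 0).
Proof.
apply: eq_bigr => i _; rewrite big_mkcond; apply: eq_bigr => j _.
case: ltnP => ij /=; last by rewrite big1.
by rewrite big_mkcond.
Qed.

Lemma sum_distinct_triples F : sum_distinct F =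
  sum_triples (fun i j k => F i j k + F i k j + F j i k + F j k i + F k i j + F k j i).
Proof.
pose ord (a b c : 'I_n) (x : R) := if (a < b < c)%N then x else 0.
have split_distinct i j k : (if [&& i != j, i != k & j != k] then F i j k else 0) =
    ord i j k (F i j k) + ord i k j (F i j k) + ord j i k (F i j k) +
    ord j k i (F i j k) + ord k i j (F i j k) + ord k j i (F i j k).
  rewrite /ord -!val_eqE /=.
  by case: (ltngtP i j) => ?; case: (ltngtP i k) => ?; case: (ltngtP j k) => ? /=;
    rewrite ?addr0 ?add0r //; lia.
have swap12 (G : 'I_n -> 'I_n -> 'I_n -> R) :
  \sum_(i < n) \sum_(j < n) \sum_(k < n) G i j k = \sum_(j < n) \sum_(i < n) \sum_(k < n) G i j k.
  exact: exchange_big.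
have swap23 (G : 'I_n -> 'I_n -> 'I_n -> R) :
  \sum_(i < n) \sum_(j < n) \sum_(k < n) G i j k = \sum_(i < n) \sum_(k < n) \sum_(j < n) G i j k.
  by apply: eq_bigr => i _; rewrite exchange_big.
(* Each of the six summands is brought back to the order i < j < k by renaming. *)
rewrite /sum_distinct sum_triplesE.
under eq_bigr do under eq_bigr do under eq_bigr do rewrite split_distinct.
under eq_bigr do under eq_bigr do rewrite !big_split.
under eq_bigr do rewrite !big_split.
rewrite !big_split /=.
rewrite [X in _ + X = _]swap23 [X in _ + X = _]swap12 [X in _ + X = _]swap23.
rewrite [X in _ + X + _ = _]swap23 [X in _ + X + _ = _]swap12.
rewrite [X in _ + X + _ + _ = _]swap12 [X in _ + X + _ + _ = _]swap23.
rewrite [X in _ + X + _ + _ + _ = _]swap12 [X in _ + X + _ + _ + _ + _ = _]swap23.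
rewrite -!big_split /=; apply: eq_bigr => i _; rewrite -!big_split /=.
apply: eq_bigr => j _; rewrite -!big_split /=; apply: eq_bigr => k _.
by rewrite /ord; case: ifP => _; [ring | rewrite !addr0].
Qed.

Lemma sum_triples_sym F : (forall i j k, F i j k = F j i k) ->
  sum_triples (fun i j k => F i j k + F i k j + F j k i) = sum_distinct F / 2.
Proof.
move=> F_sym; rewrite sum_distinct_triples /sum_triples mulr_suml; apply: eq_bigr => i _.
rewrite mulr_suml; apply: eq_bigr => j _; rewrite mulr_suml; apply: eq_bigr => k _.
by rewrite (F_sym j i k) (F_sym k i j) (F_sym k j i); field.
Qed.

Lemma card_setT_D2 (i j : 'I_n) : i != j -> #|[set: 'I_n] :\ i :\ j| = (n - 2)%N.
Proof.
move=> ij; have := cardsD1 i [set: 'I_n]; have := cardsD1 j ([set: 'I_n] :\ i).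
by rewrite cardsT card_ord !inE eq_sym ij => -> e; rewrite [in RHS]e addnA addKn.
Qed.

Lemma sum_distinct_pair (g : 'I_n -> 'I_n -> R) :
  sum_distinct (fun i j _ => g i j) = (n%:R - 2) * \sum_(i < n) \sum_(j < n | i != j) g i j.
Proof.
rewrite mulr_sumr; apply: eq_bigr => i _; rewrite mulr_sumr [RHS]big_mkcond; apply: eq_bigr => j _.
case: (eqVneq i j) => [->|ij] /=; first by rewrite big1 // => k; rewrite eqxx.
rewrite (eq_bigr (fun k => if k \in [set: 'I_n] :\ i :\ j then g i j else 0)) => [|k _].
  rewrite -big_mkcond sumr_const card_setT_D2 // -natrB ?mulr_natl //.
  by move: ij (ltn_ord i) (ltn_ord j); rewrite -(inj_eq val_inj) /=; lia.
by rewrite !inE andbT andbC ![k == _]eq_sym.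
Qed.

Lemma sum_triples_pairs (g : 'I_n -> 'I_n -> R) : (forall i j, g i j = g j i) ->
  sum_triples (fun i j k => g i j + g i k + g j k) =
  (n%:R - 2) / 2 * \sum_(i < n) \sum_(j < n | i != j) g i j.
Proof.
move=> g_sym; rewrite (sum_triples_sym (F := fun i j _ => g i j)) => [|i j k]; last exact: g_sym.
by rewrite sum_distinct_pair mulrAC.
Qed.

Lemma lca3_ikj t i j k : lca3 t i k j = lca3 t i j k.
Proof. by rewrite /lca3 !lcpA (lcpC (addr t k)). Qed.

Lemma lca3_jki t i j k : lca3 t j k i = lca3 t i j k.
Proof. by rewrite /lca3 lcpC lcpA. Qed.

Lemma rel_sepE t i j k : rel_sep t i j k = (lca2 t i j != lca3 t i j k).
Proof. by rewrite /rel_sep /proper_desc /lca3 lcp_prefix. Qed.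

Lemma triplet_costE t i j k : triplet_cost w t i j k =
  if lca2 t i j != lca3 t i j k then w i k + w j k
  else if lca2 t i k != lca3 t i j k then w i j + w j k
  else if lca2 t j k != lca3 t i j k then w i j + w i k
  else w i j + w j k + w i k.
Proof.
rewrite /triplet_cost !rel_sepE (lca3_ikj t i j k) (lca3_jki t i j k) /rel_star.
case: (eqVneq (lca2 t i j) _) => //= _; case: (eqVneq (lca2 t i k) _) => //= _.
by case: (eqVneq (lca2 t j k) _).
Qed.

Definition bc_term i j k : R := Num.min (w i j + w i k) (Num.min (w i j + w j k) (w i k + w j k)).

Lemma BCE : BC w = sum_triples bc_term.
Proof. by []. Qed.

Lemma TCE t : TC w t = sum_triples (triplet_cost w t).
Proof. by []. Qed.

Hypothesis w_ge0 : forall i j, 0 <= w i j.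

Lemma bc_term_le_triplet_cost t i j k : bc_term i j k <= triplet_cost w t i j k.
Proof.
rewrite triplet_costE /bc_term.
do 3 (case: ifP => _; first by rewrite !ge_min lexx ?orbT).
by rewrite ge_min addrAC lerDl w_ge0.
Qed.

Lemma BC_ge0 : 0 <= BC w.
Proof.
by do 3 (apply: sumr_ge0 => ? _); rewrite !le_min !addr_ge0.
Qed.

Lemma BC_le_TC t : BC w <= TC w t.
Proof. by apply: ler_sum_triples => i j k *; exact: bc_term_le_triplet_cost. Qed.

Lemma BC_gt0_rhoE t : 0 < BC w -> rho w t = (TC w t / BC w)%:E.
Proof. by rewrite /rho => /lt0r_neq0/negbTE ->. Qed.

Lemma rho_ge1 t : (1%:E <= rho w t)%E.
Proof.
rewrite /rho; case: eqP => [_|/eqP BCn0]; first by case: eqP; rewrite ?leey.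
by rewrite lee_fin ler_pdivlMr ?mul1r ?BC_le_TC // lt_def BCn0 BC_ge0.
Qed.

Lemma rho_le c t : 1 <= c -> TC w t <= c * BC w -> (rho w t <= c%:E)%E.
Proof.
rewrite /rho => c_ge1 TC_le; case: eqP => [BC0|/eqP BCn0].
  by rewrite BC0 mulr0 in TC_le; rewrite eq_le TC_le -BC0 BC_le_TC lee_fin.
by rewrite lee_fin ler_pdivrMr // lt_def BCn0 BC_ge0.
Qed.

Lemma rho_le_rho t t' : TC w t <= TC w t' -> (rho w t <= rho w t')%E.
Proof.
rewrite /rho => TC_le; case: eqP => [BC0|/eqP BCn0]; last first.
  by rewrite lee_fin ler_pM2r // invr_gt0 lt_def BCn0 BC_ge0.
have TC_ge0 : 0 <= TC w t by rewrite -BC0 BC_le_TC.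
case: eqP => [_|/eqP TCn0]; first by case: eqP; rewrite ?leey.
by rewrite ifN // gt_eqF // (lt_le_trans _ TC_le) // lt_def TCn0.
Qed.

(* TC, hence rho, depends on a tree only through this pattern in a finite type. *)
Definition lca_pattern t : {ffun 'I_n * 'I_n * 'I_n -> bool * bool * bool * bool} :=
  [ffun x => let: (i, j, k) := x in
     (rel_sep t i j k, rel_sep t i k j, rel_sep t j k i, rel_star t i j k)].

Definition pattern_cost (b : bool * bool * bool * bool) i j k : R :=
  let: (sep_ij, sep_ik, sep_jk, star) := b in
  if sep_ij then w i k + w j k
  else if sep_ik then w i j + w j k
  else if sep_jk then w i j + w i k
  else if star then w i j + w j k + w i k
  else 0.

Lemma exists_TC_minimizer t0 : is_hctree t0 ->
  exists2 t, is_hctree t & forall t', is_hctree t' -> TC w t <= TC w t'.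
Proof.
move=> t0_hc.
pose f (p : {ffun _ -> _}) := sum_triples (fun i j k => pattern_cost (p (i, j, k)) i j k).
have TC_pattern t : TC w t = f (lca_pattern t).
  by apply: eq_sum_triples => i j k *; rewrite ffunE.
have [t t_hc t_min] := exists_minimizer (ok := is_hctree) lca_pattern f t0_hc.
by exists t => // t' /t_min; rewrite -!TC_pattern.
Qed.

Lemma rho_star_in_of c t0 : is_hctree t0 -> (rho w t0 <= c%:E)%E -> rho_star_in w 1 c.
Proof.
move=> t0_hc rho_t0; have [t t_hc t_min] := exists_TC_minimizer t0_hc.
exists t; split => //; first by move=> t' /t_min/rho_le_rho.
  exact: rho_ge1.
exact: le_trans (rho_le_rho (t_min _ t0_hc)) rho_t0.
Qed.

End Costs.

Section CaterpillarCost.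
Variables (R : realFieldType) (n : nat) (w : 'M[R]_n).
Implicit Types (r : {perm 'I_n}) (i j k x y z : 'I_n).

Definition comes_first r x y z := (r x < r y)%N && (r x < r z)%N.

Lemma perm_val_eq r x y : (nat_of_ord (r x) == r y) = (x == y).
Proof. by rewrite val_eqE (inj_eq perm_inj). Qed.

Lemma comes_first_unique r x y z : x != y -> x != z -> y != z ->
  (comes_first r x y z + comes_first r y x z + comes_first r z x y)%N = 1%N.
Proof. by rewrite /comes_first -!(perm_val_eq r); lia. Qed.

Lemma lca2_caterpillar r x y : x != y -> lca2 (caterpillar r) x y = nseq (minn (r x) (r y)) 1%N.
Proof. by rewrite /lca2 !addr_caterpillar => xy; rewrite lcp_rcons_nseq1 // perm_val_eq. Qed.

Lemma lca3_caterpillar r x y z : x != y ->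
  lca3 (caterpillar r) x y z = nseq (minn (minn (r x) (r y)) (r z)) 1%N.
Proof.
by move=> xy; rewrite /lca3 -/(lca2 _ x y) lca2_caterpillar // addr_caterpillar lcp_nseq1_rcons.
Qed.

Lemma triplet_cost_caterpillar r i j k : i != j -> i != k -> j != k ->
  triplet_cost w (caterpillar r) i j k =
    (if comes_first r i j k then w i j + w i k else 0) +
    (if comes_first r j i k then w i j + w j k else 0) +
    (if comes_first r k i j then w i k + w j k else 0).
Proof.
move=> ij ik jk; have := comes_first_unique r ij ik jk.
rewrite triplet_costE !lca2_caterpillar // lca3_caterpillar // !nseq1_inj.
move: ij ik jk; rewrite /comes_first -!(perm_val_eq r).
move: (nat_of_ord (r i)) (nat_of_ord (r j)) (nat_of_ord (r k)) => a b c ab ac bc.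
have -> : (minn a b != minn (minn a b) c) = (c < a)%N && (c < b)%N by lia.
have -> : (minn a c != minn (minn a b) c) = (b < a)%N && (b < c)%N by lia.
have -> : (minn b c != minn (minn a b) c) = (a < b)%N && (a < c)%N by lia.
by case: ((a < b) && _)%N; case: ((b < a) && _)%N; case: ((c < a) && _)%N;
  rewrite //= ?addr0 ?add0r.
Qed.

Lemma sum_comes_first x y z (a : R) : x != y -> x != z -> y != z ->
  \sum_r (if comes_first r x y z then a else 0) = a * (#|{perm 'I_n}|%:R / 3).
Proof.
move=> xy xz yz; pose N x y z : R := \sum_r (if comes_first r x y z then 1 else 0).
have N23 x' y' z' : N x' y' z' = N x' z' y' by apply: eq_bigr => r _; rewrite /comes_first andbC.
have N12 x' y' z' : z' != x' -> z' != y' -> N x' y' z' = N y' x' z'.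
  move=> zx zy; rewrite /N (reindex_inj (mulgI (tperm x' y'))); apply: eq_bigr => r _.
  by rewrite /comes_first !permM tpermL tpermR tpermD // eq_sym.
have N_sum : N x y z + N y x z + N z x y = #|{perm 'I_n}|%:R.
  rewrite -!big_split /= -sumr_const; apply: eq_bigr => r _.
  have := comes_first_unique r xy xz yz.
  by case: (comes_first r x y z); case: (comes_first r y x z); case: (comes_first r z x y);
    rewrite //= ?addr0 ?add0r.
have Nyxz : N y x z = N x y z by rewrite N12 // eq_sym.
have Nzxy : N z x y = N x y z by rewrite N12 ?(eq_sym y x) // N23.
have -> : \sum_r (if comes_first r x y z then a else 0) = a * N x y z.
  by rewrite mulr_sumr; apply: eq_bigr => r _; case: ifP; rewrite ?mulr1 ?mulr0.
by rewrite -N_sum Nyxz Nzxy; move: (N x y z) => m; field.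
Qed.

Lemma sum_TC_caterpillar : \sum_r TC w (caterpillar r) =
  #|{perm 'I_n}|%:R * (2 / 3 * sum_triples (fun i j k => w i j + w i k + w j k)).
Proof.
under eq_bigr do rewrite TCE; rewrite exchange_sum_triples mulrA mulr_sum_triples.
apply: eq_sum_triples => i j k ij ik jk.
have [ji ki kj] : [/\ j != i, k != i & k != j] by rewrite !(eq_sym k) eq_sym.
rewrite (eq_bigr _ (fun r _ => triplet_cost_caterpillar r ij ik jk)) !big_split /=.
rewrite (sum_comes_first _ ij ik jk) (sum_comes_first _ ji jk ik) (sum_comes_first _ ki kj ij).
by move: (#|{perm 'I_n}|%:R : R) => N; field.
Qed.

Lemma exists_caterpillar_TC_le :
  exists r, TC w (caterpillar r) <= 2 / 3 * sum_triples (fun i j k => w i j + w i k + w j k).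
Proof.
apply: exists_le_mean; last by rewrite sum_TC_caterpillar.
by apply/card_gt0P; exists 1%g.
Qed.

End CaterpillarCost.

Section PartitionTreeCost.
Variables (R : realFieldType) (n : nat) (w : 'M[R]_n) (T : eqType) (f : 'I_n -> T).
Implicit Types (i j k : 'I_n).

Definition cross_weight i j : R := if f i == f j then 0 else w i j.

Lemma triplet_cost_partition_tree i j k : ~~ ((f i == f j) && (f j == f k)) ->
  triplet_cost w (partition_tree f) i j k = cross_weight i j + cross_weight i k + cross_weight j k.
Proof.
move=> not_all; rewrite triplet_costE lca3_partition_tree // !lca2_partition_tree !negbK.
rewrite /cross_weight; case: (eqVneq (f i) (f j)) not_all => [-> /= fjk | fij _].
  by rewrite (negbTE fjk) add0r.
case: (eqVneq (f i) (f k)) => [fik | fik].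
  by rewrite -fik eq_sym (negbTE fij) addr0.
by case: (eqVneq (f j) (f k)) => [_|_]; rewrite ?addr0 // addrAC.
Qed.

Hypothesis w_sym : forall i j, w i j = w j i.
Hypothesis small_classes : forall i j k, f i = f j -> f i = f k -> [|| i == j, i == k | j == k].

Lemma TC_partition_tree :
  TC w (partition_tree f) = (n%:R - 2) / 2 * \sum_(i < n) \sum_(j < n | i != j) cross_weight i j.
Proof.
rewrite TCE (eq_sum_triples
  (G := fun i j k => cross_weight i j + cross_weight i k + cross_weight j k)).
  by apply: sum_triples_pairs => i j; rewrite /cross_weight eq_sym w_sym.
move=> i j k ij ik jk; apply: triplet_cost_partition_tree; apply/negP => /andP[/eqP fij /eqP fjk].
by move: (small_classes fij (etrans fij fjk)); rewrite (negbTE ij) (negbTE ik) (negbTE jk).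
Qed.

End PartitionTreeCost.

Section DominantPairs.
Variables (R : realFieldType) (n : nat) (w : 'M[R]_n).
Hypothesis w_sym : forall i j, w i j = w j i.
Implicit Types (i j k : 'I_n).

(* Breaking ties lexicographically makes the comparison of pairs a strict total order. *)
Definition pair_key i j : R *l (nat *l nat) := (w i j, (minn i j, maxn i j)).

Lemma pair_keyC i j : pair_key i j = pair_key j i.
Proof. by rewrite /pair_key w_sym minnC maxnC. Qed.

Lemma pair_key_eq i j k l : i != j ->
  (pair_key i j == pair_key k l) = ((i == k) && (j == l)) || ((i == l) && (j == k)).
Proof.
move=> ij; apply/eqP/idP => [[_ mn mx]|/orP[]/andP[/eqP-> /eqP->] //]; last exact: pair_keyC.
by move: ij mn mx; rewrite -!val_eqE /=; lia.
Qed.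

Lemma w_le_of_pair_key_lt i j k l : (pair_key i j < pair_key k l)%O -> w i j <= w k l.
Proof. by rewrite ltEprodlexi => /andP[]. Qed.

Definition heaviest i j k :=
  (pair_key i k < pair_key i j)%O && (pair_key j k < pair_key i j)%O.

Lemma heaviestC i j k : heaviest i j k = heaviest j i k.
Proof. by rewrite /heaviest andbC (pair_keyC j i). Qed.

Definition light_weight i j k : R := if heaviest i j k then 0 else w i j.

Definition dominant i j := (i != j) && [forall k, (k != i) && (k != j) ==> heaviest i j k].

Lemma dominantC i j : dominant i j = dominant j i.
Proof.
rewrite /dominant eq_sym; congr (_ && _); apply: eq_forallb => k.
by rewrite andbC heaviestC.
Qed.

(* Two dominant pairs sharing a vertex would each be heavier than the other. *)
Lemma dominant_uniq i j l : dominant i j -> dominant i l -> j = l.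
Proof.
move=> /andP[ij /forallP dom_j] /andP[il /forallP dom_l]; apply/eqP/negP => /negP jl.
have := dom_j l; rewrite eq_sym il eq_sym jl => /andP[lt_l _].
have := dom_l j; rewrite eq_sym ij jl => /andP[lt_j _].
by move: (lt_trans lt_l lt_j); rewrite ltxx.
Qed.

Definition mate i : 'I_n := odflt i [pick j | dominant i j].

Lemma mateE i j : dominant i j -> mate i = j.
Proof.
rewrite /mate; case: pickP => [j' /dominant_uniq dom_ij' /dom_ij' //|no_mate].
by rewrite no_mate.
Qed.

Lemma mate_dominant i : mate i != i -> dominant i (mate i).
Proof. by rewrite /mate; case: pickP => [j ->|_] //=; rewrite eqxx. Qed.

Lemma mateK i : mate (mate i) = i.
Proof.
have [fix_i|] := eqVneq (mate i) i; first by rewrite !fix_i.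
by move/mate_dominant; rewrite dominantC => /mateE.
Qed.

Lemma mate_eq i j : i != j -> (mate i == j) = dominant i j.
Proof.
move=> ij; apply/eqP/idP => [mate_ij|/mateE //].
by rewrite -mate_ij; apply: mate_dominant; rewrite mate_ij eq_sym.
Qed.

Lemma exists_not_heaviest i j : i != j -> mate i != j ->
  exists k, [/\ k != i, k != j & ~~ heaviest i j k].
Proof.
move=> ij; rewrite mate_eq // /dominant ij negb_forall => /existsP[k].
by rewrite negb_imply => /andP[/andP[ki kj] not_top]; exists k.
Qed.

Hypothesis w_ge0 : forall i j, 0 <= w i j.

(* Exactly one pair of the triangle is heaviest, and it is heaviest by weight too. *)
Lemma light_weight_le_bc_term i j k : i != j -> i != k -> j != k ->
  light_weight i j k + light_weight i k j + light_weight j k i <= bc_term w i j k.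
Proof.
move=> ij ik jk; rewrite /light_weight /heaviest (pair_keyC k j) (pair_keyC j i) (pair_keyC k i).
have ab : pair_key i j != pair_key i k by rewrite pair_key_eq // eqxx (negbTE jk) (negbTE ik).
have ac : pair_key i j != pair_key j k by rewrite pair_key_eq // (negbTE ij) (negbTE ik).
have bc : pair_key i k != pair_key j k by rewrite pair_key_eq // (negbTE ij) (negbTE ik).
have := w_ge0 i j; have := w_ge0 i k; have := w_ge0 j k; rewrite /bc_term !le_min.
by case/or3P: (lt_max3 ab ac bc) => /andP[lt1 lt2];
  rewrite lt1 lt2 (lt_gtF lt1) (lt_gtF lt2) ?andbF /=;
  move: lt1 lt2 => /w_le_of_pair_key_lt ? /w_le_of_pair_key_lt ? *; apply/and3P; split; lra.
Qed.

Lemma light_weight_ge0 i j k : 0 <= light_weight i j k.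
Proof. by rewrite /light_weight; case: ifP. Qed.

Definition mate_class i : {set 'I_n} := [set i; mate i].

Lemma mate_class_eq i j : i != j -> (mate_class i == mate_class j) = (mate i == j).
Proof.
move=> ij; apply/eqP/eqP => [cls_ij|<-]; last by rewrite /mate_class mateK setUC.
have : i \in mate_class j by rewrite -cls_ij !inE eqxx.
by rewrite !inE (negbTE ij) => /eqP ->; rewrite mateK.
Qed.

Lemma mate_class_small i j k :
  mate_class i = mate_class j -> mate_class i = mate_class k -> [|| i == j, i == k | j == k].
Proof.
case: (eqVneq i j) => //= ij; case: (eqVneq i k) => //= ik /eqP cls_ij /eqP cls_ik.
by move: cls_ij cls_ik; rewrite !mate_class_eq // => /eqP <- /eqP ->.
Qed.

(* A triple pays in BC at least its light pairs, and a pair outside the matching is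
   light in some triple. *)
Lemma half_cross_weight_le_BC :
  (\sum_(i < n) \sum_(j < n | i != j) cross_weight w mate_class i j) / 2 <= BC w.
Proof.
rewrite BCE; apply: le_trans (ler_sum_triples light_weight_le_bc_term).
rewrite sum_triples_sym => [|i j k]; last by rewrite /light_weight heaviestC w_sym.
rewrite ler_pM2r ?invr_gt0 ?ltr0n //; apply: ler_sum => i _; rewrite big_mkcond.
apply: ler_sum => j _; case: (eqVneq i j) => [_|ij] /=; first by rewrite big1.
have sum_ge0 : 0 <= \sum_(k < n) (if (i != k) && (j != k) then light_weight i j k else 0).
  by apply: sumr_ge0 => k _; case: ifP => // _; exact: light_weight_ge0.
rewrite /cross_weight mate_class_eq //.
case: (boolP (mate i == j)) => // mate_ij.
have [k [ki kj not_top]] := exists_not_heaviest ij mate_ij.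
rewrite (bigD1 k) //= (eq_sym i) (eq_sym j) ki kj /light_weight (negbTE not_top) /= lerDl.
by apply: sumr_ge0 => l _; case: ifP => // _; exact: light_weight_ge0.
Qed.

Definition matching_tree : hctree n := partition_tree mate_class.

Lemma TC_matching_tree_le : (2 <= n)%N -> TC w matching_tree <= (n%:R - 2) * BC w.
Proof.
move=> n_ge2; rewrite /matching_tree TC_partition_tree //; last exact: mate_class_small.
rewrite mulrAC -mulrA ler_wpM2l ?half_cross_weight_le_BC //.
by rewrite subr_ge0 (ler_nat R 2 n).
Qed.

End DominantPairs.

Theorem rho_star_weighted (R : realFieldType) (n : nat) (w : 'M[R]_n) :
  (3 <= n)%N -> (forall i j, w i j = w j i) -> (forall i j, 0 <= w i j) ->
  rho_star_in w 1 (n%:R - 2).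
Proof.
move=> n_ge3 w_sym w_ge0.
apply: (rho_star_in_of w_ge0 (partition_tree_hctree _ (leq_trans _ n_ge3))) => //.
apply: rho_le => //; first by rewrite lerBrDr (ler_nat R 3 n).
exact: (TC_matching_tree_le w_sym w_ge0 (ltnW n_ge3)).
Qed.

Section UnweightedGraph.
Variables (R : realFieldType) (n : nat) (e : rel 'I_n).
Hypotheses (e_sym : symmetric e) (e_irr : irreflexive e).
Local Notation w := (unweighted (R := R) e).
Implicit Types (i j k : 'I_n).

Lemma unweightedE i j : w i j = (e i j)%:R.
Proof. by rewrite mxE; case: (e i j). Qed.

Lemma unweighted_sym i j : w i j = w j i.
Proof. by rewrite !unweightedE e_sym. Qed.

Lemma unweighted_ge0 i j : 0 <= w i j.
Proof. by rewrite unweightedE ler0n. Qed.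

Definition degree k : R := \sum_(j < n) w k j.

Lemma sum_degree : \sum_(k < n) degree k = 2 * (num_edges e)%:R.
Proof.
have edges_lt : (num_edges e)%:R = \sum_(p : 'I_n * 'I_n) ((p.1 < p.2)%N && e p.1 p.2)%:R :> R.
  rewrite /num_edges -sum1_card natr_sum big_mkcond; apply: eq_bigr => p _.
  by rewrite inE; case: ifP.
have edges_gt : (num_edges e)%:R = \sum_(p : 'I_n * 'I_n) ((p.2 < p.1)%N && e p.1 p.2)%:R :> R.
  rewrite edges_lt (reindex_inj (h := fun p : 'I_n * 'I_n => (p.2, p.1))); last first.
    by move=> [? ?] [? ?] [-> ->].
  by apply: eq_bigr => p _; rewrite e_sym.
rewrite /degree pair_big mulr2n mulrDl mul1r {1}edges_lt edges_gt -big_split.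
apply: eq_bigr => [[i j]] _ /=; rewrite unweightedE.
by case: (ltngtP i j) => [_|_|/val_inj ->]; rewrite ?e_irr ?addr0 ?add0r.
Qed.

Lemma sum_off_diag_unweighted : \sum_(i < n) \sum_(j < n | i != j) w i j = \sum_(i < n) degree i.
Proof.
apply: eq_bigr => i _; rewrite /degree [RHS](bigD1 i) // unweightedE e_irr /= add0r.
by apply: eq_bigl => j; rewrite eq_sym.
Qed.

Lemma sum_triples_unweighted :
  sum_triples (fun i j k => w i j + w i k + w j k) = (n%:R - 2) / 2 * \sum_(k < n) degree k.
Proof. by rewrite sum_triples_pairs ?sum_off_diag_unweighted //; exact: unweighted_sym. Qed.

Lemma sum_triples_paths :
  sum_triples (fun i j k => w i k * w j k + w i j * w k j + w j i * w k i) =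
  (\sum_(k < n) degree k ^+ 2 - \sum_(k < n) degree k) / 2.
Proof.
rewrite (sum_triples_sym (F := fun i j k => w i k * w j k)) => [|i j k]; last exact: mulrC.
congr (_ / _); rewrite /sum_distinct.
have term_eq i j k : (if [&& i != j, i != k & j != k] then w i k * w j k else 0) =
    w i k * w j k - (if i == j then w i k else 0).
  case: (eqVneq i j) => [->|ij] /=; first by rewrite unweightedE -natrM mulnb andbb subrr.
  case: (eqVneq i k) => [->|_]; first by rewrite unweightedE e_irr mul0r subr0.
  by case: (eqVneq j k) => [->|_]; rewrite ?unweightedE ?e_irr ?mulr0 subr0.
under eq_bigr do under eq_bigr do under eq_bigr do rewrite term_eq.
under eq_bigr do under eq_bigr do rewrite sumrB.
under eq_bigr do rewrite sumrB.
rewrite sumrB; congr (_ - _).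
  under eq_bigr do rewrite exchange_big; rewrite exchange_big; apply: eq_bigr => k _.
  rewrite /degree expr2 mulr_suml; apply: eq_bigr => i _; rewrite mulr_sumr.
  by apply: eq_bigr => j _; rewrite !(unweighted_sym k).
apply: eq_bigr => i _; rewrite (eq_bigr (fun j => if i == j then degree i else 0)) => [|j _].
  by rewrite -big_mkcond (big_pred1 i) // => j; exact: eq_sym.
by case: eqP => // _; rewrite big1.
Qed.

Lemma paths_le_bc_term i j k :
  2 / 3 * (w i k * w j k + w i j * w k j + w j i * w k i) <= bc_term w i j k.
Proof.
rewrite /bc_term !unweightedE (e_sym k j) (e_sym j i) (e_sym k i) !le_min.
by case: (e i j); case: (e i k); case: (e j k); apply/and3P; split => /=; lra.
Qed.

Lemma sum_degree_sqr_le_BC :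
  (\sum_(k < n) degree k ^+ 2 - \sum_(k < n) degree k) / 3 <= BC w.
Proof.
rewrite BCE; apply: le_trans (ler_sum_triples (fun i j k _ _ _ => paths_le_bc_term i j k)).
by rewrite -mulr_sum_triples sum_triples_paths; lra.
Qed.

Lemma degree_ge1 i a : e i a -> 1 <= degree i.
Proof.
move=> ia; rewrite /degree (bigD1 a) // unweightedE ia /= lerDl.
by apply: sumr_ge0 => j _; exact: unweighted_ge0.
Qed.

Lemma degree_ge2 i a b : a != b -> e i a -> e i b -> 2 <= degree i.
Proof.
move=> ab ia ib; have ba : b != a by rewrite eq_sym.
rewrite /degree (bigD1 a) // (bigD1 b) // !unweightedE ia ib /=.
rewrite addrA lerDl; apply: sumr_ge0 => j _; exact: unweighted_ge0.
Qed.

Lemma sum_degree_ge : (3 <= n)%N -> (forall i j, connect e i j) ->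
  n%:R + 1 <= \sum_(k < n) degree k.
Proof.
move=> n_ge3 e_conn; have [x [a [b [ab xa xb]]]] : exists x a b, [/\ a != b, e x a & e x b].
  by apply: connected_branching; rewrite ?card_ord.
apply: le_trans (_ : \sum_(k < n) (1 + (if k == x then 1 else 0)) <= _); last first.
  apply: ler_sum => k _; case: (eqVneq k x) => [->|_]; first exact: degree_ge2 ab xa xb.
  have [y ky] : exists y, e k y by apply: connected_neighbor => //; rewrite card_ord ltnW.
  by rewrite addr0; exact: degree_ge1 ky.
by rewrite big_split /= sumr_const card_ord -big_mkcond big_pred1_eq.
Qed.

End UnweightedGraph.

Theorem rho_star_unweighted (R : realFieldType) (n : nat) (e : rel 'I_n) :
  (3 <= n)%N -> symmetric e -> irreflexive e -> (forall i j, connect e i j) ->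
  rho_star_in (unweighted (R := R) e) 1
    ((n%:R ^+ 2 - 2 * n%:R) / (2 * (num_edges e)%:R - n%:R)).
Proof.
move=> n_ge3 e_sym e_irr e_conn; set w := unweighted e.
have [r TC_le] := exists_caterpillar_TC_le w.
apply: (rho_star_in_of (unweighted_ge0 R e) (caterpillar_hctree r (leq_trans _ n_ge3))) => //.
rewrite -sum_degree // {}sum_triples_unweighted // in TC_le *.
have D_ge := sum_degree_ge R e_sym n_ge3 e_conn.
have CS := sqr_sum_le (degree R e).
have BC_ge := sum_degree_sqr_le_BC R e_sym e_irr.
set D := \sum_(k < n) degree R e k in TC_le D_ge CS BC_ge *.
set Q := \sum_(k < n) degree R e k ^+ 2 in CS BC_ge.
have n_ge3R : 3 <= n%:R :> R by rewrite (ler_nat R 3 n).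
have D_lt_Q : D < Q.
  have : D * (n%:R + 1) <= D ^+ 2 by rewrite expr2; apply: ler_wpM2l; lra.
  nra.
have BC_gt0 : 0 < BC w by lra.
rewrite BC_gt0_rhoE // lee_fin ler_pdivrMr //; apply: le_trans TC_le _.
have c_ge0 : 0 <= (n%:R ^+ 2 - 2 * n%:R) / (D - n%:R) by apply: divr_ge0; nra.
apply: le_trans (ler_wpM2l c_ge0 BC_ge).
have Dn_gt0 : 0 < D - n%:R by lra.
rewrite -(ler_pM2r Dn_gt0) [in X in _ <= X]mulrAC divfK ?gt_eqF //.
have : 0 <= (n%:R - 2) * (n%:R * Q - D ^+ 2) by apply: mulr_ge0; lra.
rewrite !expr2 in CS *; nra.
Qed.

Theorem theorem1 :
  (* (i) weighted graphs *)
  (forall (R : realFieldType) (n : nat) (w : 'M[R]_n),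
      (3 <= n)%N ->
      (forall i j, w i j = w j i) ->
      (forall i j, 0 <= w i j) ->
      rho_star_in w 1 (n%:R - 2))
  /\
  (* (ii) connected unweighted graphs *)
  (forall (R : realFieldType) (n : nat) (e : rel 'I_n),
      (3 <= n)%N ->
      symmetric e -> irreflexive e ->
      (forall i j, connect e i j) ->
      rho_star_in (unweighted (R:=R) e) 1
        ((n%:R ^+ 2 - 2 * n%:R) / (2 * (num_edges e)%:R - n%:R))).
Proof. split; [exact: rho_star_weighted | exact: rho_star_unweighted]. Qed.
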